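(* Let $\mathcal{H}\subseteq\mathcal{F}$ be saturated fusion systems over a finite $p$-group $S$, let $P\le S$ be fully $\mathcal{F}$-normalized and let $\mathcal{N}:=N_{\mathcal{F}}(P)\cap\mathcal{H}$. Then $N_{\mathcal{H}}(P)\subseteq\mathcal{N}$, and the morphisms of $\mathcal{N}$ and $N_{\mathcal{H}}(P)$ between $\mathcal{F}$-centric subgroups coincide. In particular $\mathcal{O}_{\mathcal{C}}(\mathcal{N})=\mathcal{O}_{\mathcal{C}}(N_{\mathcal{H}}(P))$ for every family $\mathcal{C}$ of $\mathcal{F}$-centric subgroups of $S$.
   Context: $P$ is fully $\mathcal{F}$-normalized if $|N_S(P)|\ge|N_S(Q)|$ for all $\mathcal{F}$-conjugates $Q$ of $P$. $N_{\mathcal{F}}(P)$ is the fusion system over $N_S(P)$ whose morphisms $A\to B$ are those $\varphi\in\operatorname{Hom}_{\mathcal{F}}(A,B)$ extending to some $\hat\varphi\in\operatorname{Hom}_{\mathcal{F}}(AP,BP)$ with $\hat\varphi(P)=P$; similarly $N_{\mathcal{H}}(P)$. $\mathcal{N}=N_{\mathcal{F}}(P)\cap\mathcal{H}$ is the fusion system over $N_S(P)$ whose morphisms are those lying in both $N_{\mathcal{F}}(P)$ and $\mathcal{H}$. A subgroup is $\mathcal{F}$-centric if $C_S(Q)\le Q$ for all its $\mathcal{F}$-conjugates $Q$. $\mathcal{O}_{\mathcal{C}}(\mathcal{E})$ is the full subcategory on $\mathcal{C}$ (intersected with the subgroups of the base group of $\mathcal{E}$) of the orbit category of $\mathcal{E}$,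 whose morphisms are $\operatorname{Aut}_Q(Q)\backslash\operatorname{Hom}_{\mathcal{E}}(R,Q)$. *)

From mathcomp Require Import all_boot all_fingroup.
From mathcomp Require Import automorphism pgroup.

Set Implicit Arguments.
Unset Strict Implicit.
Unset Printing Implicit Defensive.

Local Open Scope group_scope.

Section FusionDefs.

Variable gT : finGroupType.

(* A morphism with domain A is represented by a finite function gT -> gT
   that is trivial (= 1) outside A; this makes the representation unique.
   A morphism A -> B (B any subgroup containing the image) is a morphism
   with domain A whose image is contained in B. *)
Local Notation mor := {ffun gT -> gT}.

(* A fusion system (predicate): [F A f] means f is an F-morphism with
   domain A (and codomain S, hence any subgroup containing f @: A). *)
Definition fsys := {set gT} -> mor -> bool.

Definition restrm (A : {set gT}) (f : gT -> gT) : mor :=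
  [ffun x => if x \in A then f x else 1].

Definition conjmor (A : {set gT}) (s : gT) : mor := restrm A (fun x => x ^ s).

Definition inj_hom (A : {set gT}) (f : mor) : Prop :=
  [/\ {in A &, {morph f : x y / x * y}}, {in A &, injective f}
    & {in ~: A, forall x, f x = 1}].

Definition homset (F : fsys) (A B : {set gT}) : {set mor} :=
  [set f : mor | F A f && (f @: A \subset B)].

Record fusion_system (S : {group gT}) (F : fsys) : Prop := FusionSystem {
  fs_dom : forall A f, F A f ->
    [/\ group_set A, A \subset S, f @: A \subset S & inj_hom A f];
  fs_conj : forall (A : {group gT}) s, A \subset S -> s \in S ->
    F A (conjmor A s);
  fs_comp : forall A B f g, F A f -> F B g -> f @: A \subset B ->
    F A (restrm A (g \o f));
  fs_inv : forall A f, F A f ->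
    exists g, F (f @: A) g /\ {in A, forall x, g (f x) = x}
}.

(* Q' is an F-conjugate of Q iff Q' = f @: Q for some F-morphism f with
   domain Q. *)
Definition fully_normalized (S : {group gT}) (F : fsys) (Q : {set gT}) :=
  Q \subset S /\ forall f, F Q f -> #|'N_S(f @: Q)| <= #|'N_S(Q)|.

Definition fully_centralized (S : {group gT}) (F : fsys) (Q : {set gT}) :=
  Q \subset S /\ forall f, F Q f -> #|'C_S(f @: Q)| <= #|'C_S(Q)|.

Definition centric (S : {group gT}) (F : fsys) (Q : {set gT}) :=
  Q \subset S /\ forall f, F Q f -> 'C_S(f @: Q) \subset f @: Q.

(* Aut_F(Q) and Aut_S(Q) as groups of automorphisms of Q (permutations of
   gT fixing everything outside Q, cf. MathComp's Aut). *)
Definition AutF (F : fsys) (Q : {set gT}) : {set {perm gT}} :=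
  [set a in Aut Q | F Q (restrm Q a)].

Definition AutS (S : {group gT}) (Q : {set gT}) : {set {perm gT}} :=
  [set a in Aut Q | [exists s in 'N_S(Q), restrm Q a == conjmor Q s]].

(* N_phi = { g in N_S(Q) | phi c_g phi^-1 in Aut_S(phi(Q)) } *)
Definition Nphi (S : {group gT}) (Q : {set gT}) (f : mor) : {set gT} :=
  [set g in 'N_S(Q) |
     [exists h in 'N_S(f @: Q), [forall x in Q, f (x ^ g) == (f x) ^ h]]].

Definition saturated (p : nat) (S : {group gT}) (F : fsys) : Prop :=
  (forall Q : {group gT}, fully_normalized S F Q ->
     fully_centralized S F Q /\ p.-Sylow(AutF F Q) (AutS S Q)) /\
  (forall (Q : {group gT}) f, F Q f -> fully_centralized S F (f @: Q) ->
     exists g, F (Nphi S Q f) g /\ restrm Q g = f).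

(* N_F(P): fusion system over N_S(P); phi : A -> B is a morphism iff
   A, B <= N_S(P), phi in Hom_F(A,B) and phi extends to some
   phihat in Hom_F(AP, BP) with phihat(P) = P. (In the domain representation
   the target B is phi(A).) *)
Definition normalizer_fsys (S : {group gT}) (F : fsys) (P : {set gT}) : fsys :=
  fun A f =>
    [&& A \subset 'N_S(P), f @: A \subset 'N_S(P), F A f &
        [exists g : mor,
           [&& F (A * P) g, g @: (A * P) \subset (f @: A) * P,
               g @: P == P & restrm A g == f]]].

Definition fsys_cap (F1 F2 : fsys) : fsys := fun A f => F1 A f && F2 A f.

(* Morphism set Aut_Q(Q) \ Hom_E(R, Q) of the orbit category of E:
   orbits of Hom_E(R,Q) under post-composition with conjugations by Q. *)
Definition orbit_hom (E : fsys) (R Q : {set gT}) : {set {set mor}} :=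
  [set [set restrm R (fun x => f x ^ q) | q in Q] | f : mor in homset E R Q].

End FusionDefs.

From Pilot Require Import Defs.
From mathcomp Require Import all_boot all_fingroup pgroup.
From mathcomp Require Import automorphism cyclic center nilpotent sylow.
From mathcomp Require Import zify.
(* Let [restrm] of Defs shadow fingroup's morphism restriction again. *)
Import Defs.

(** A morphism [psi : X -> S] of [F] whose restriction to an [F]-centric
    subgroup [A <= X] lies in [H] lies itself in [H].  If [A] is normal in [X],
    axiom (II) for [H] extends [psi|A] to some [k] in [Hom_H(X, S)]; then
    [psi o k^-1] fixes the centric normal subgroup [k(A)] pointwise, and such
    a morphism is conjugation by an element of [k(A)]: moved to a fully
    normalized conjugate it becomes a [p]-element of [Aut_F], since it is
    trivial on [k(A)] and on the quotient, so by axiom (I) it is conjugate into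
    [Aut_S], and the conjugating element centralizes a centric subgroup.  The
    general case follows by induction on [|X : A|], as [A < N_X(A)] in the
    [p]-group [X].  Applied to the extension [AP -> S] of a morphism of
    [N_F(P) \cap H] this identifies it with a morphism of [N_H(P)]. *)

Set Implicit Arguments.
Unset Strict Implicit.
Unset Printing Implicit Defensive.

Local Open Scope group_scope.

Section Restriction.

Variable gT : finGroupType.
Implicit Types (A B : {set gT}) (f : gT -> gT).

Lemma restrm_in A f x : x \in A -> restrm A f x = f x.
Proof. by rewrite ffunE => ->. Qed.

Lemma restrm_out A f x : x \notin A -> restrm A f x = 1.
Proof. by rewrite ffunE => /negbTE->. Qed.

Lemma restrm_restrm A B f : A \subset B -> restrm A (restrm B f) = restrm A f.
Proof.
move=> sAB; apply/ffunP=> x; rewrite !ffunE.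
by case: ifP => // /(subsetP sAB) ->.
Qed.

Lemma imset_restrm A f : restrm A f @: A = f @: A.
Proof. by apply: eq_in_imset => x; apply: restrm_in. Qed.

Lemma imset_restrm_comp A f g : restrm A (g \o f) @: A = g @: (f @: A).
Proof. by rewrite imset_restrm imset_comp. Qed.

End Restriction.

Lemma Aut_fix_coset_p_elt (gT : finGroupType) p (Q Y : {group gT})
    (a : {perm gT}) :
  p.-group Y -> Y \subset Q -> a \in Aut Q -> {in Y, forall y, a y = y} ->
  {in Q, forall x, x^-1 * a x \in Y} -> p.-elt a.
Proof.
move=> pY sYQ AutQa aY aQ; have aM := morphicP (Aut_morphic AutQa).
have aX k x : x \in Q -> (a ^+ k) x = x * (x^-1 * a x) ^+ k.
  move=> Qx; have Yw := aQ x Qx; have Qw := subsetP sYQ _ Yw.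
  elim: k => [|k IHk]; first by rewrite perm1 mulg1.
  rewrite expgSr permM IHk aM ?groupX // (aY _ (groupX k Yw)).
  by rewrite expgS mulgA mulKVg.
apply: (pnat_dvd _ pY); rewrite order_dvdn; apply/eqP/permP=> x; rewrite perm1.
have [Qx | notQx] := boolP (x \in Q); first by rewrite aX // expg_cardG ?mulg1 ?aQ.
by rewrite permX_fix ?(out_Aut AutQa).
Qed.

Section FusionSystem.

Variables (gT : finGroupType) (S : {group gT}) (F : fsys gT).
Hypothesis fsF : fusion_system S F.
Implicit Types (A B : {set gT}) (f g : {ffun gT -> gT}).

Lemma fmorM A f : F A f -> {in A &, {morph f : x y / x * y}}.
Proof. by case/(fs_dom fsF)=> _ _ _ []. Qed.

Lemma fmor_inj A f : F A f -> {in A &, injective f}.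
Proof. by case/(fs_dom fsF)=> _ _ _ []. Qed.

Lemma fmor_out A f x : F A f -> x \notin A -> f x = 1.
Proof. by case/(fs_dom fsF)=> _ _ _ [_ _ f1] xA; apply: f1; rewrite inE. Qed.

Lemma fmor_group_set A f : F A f -> group_set A.
Proof. by case/(fs_dom fsF). Qed.

Lemma fmor_sub A f : F A f -> A \subset S.
Proof. by case/(fs_dom fsF). Qed.

Lemma fmor_imS A f : F A f -> f @: A \subset S.
Proof. by case/(fs_dom fsF). Qed.

Lemma restrm_fmor A f : F A f -> restrm A f = f.
Proof.
move=> FAf; apply/ffunP=> x; rewrite ffunE.
by case: ifPn => // xA; rewrite (fmor_out FAf).
Qed.

Lemma conjmor1 A : conjmor A 1 = restrm A id.
Proof. by apply/ffunP=> x; rewrite !ffunE conjg1. Qed.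

Lemma fmor_restr A B f : F A f -> group_set B -> B \subset A -> F B (restrm B f).
Proof.
move=> FAf gB sBA; pose BG := Group gB.
have sBS : BG \subset S := subset_trans sBA (fmor_sub FAf).
have Fid := fs_conj fsF sBS (group1 S); rewrite conjmor1 in Fid.
have sidB : restrm BG id @: BG \subset A by rewrite imset_restrm imset_id.
by have := fs_comp fsF Fid FAf sidB; congr (F _ _); apply/ffunP=> x;
  rewrite !ffunE; case: ifP => //= xB; rewrite restrm_in.
Qed.

Lemma fmor_id (A : {group gT}) : A \subset S -> F A (restrm A id).
Proof. by move=> sAS; rewrite -conjmor1; apply: (fs_conj fsF). Qed.

Section Morphism.

Variables (A : {group gT}) (f : {ffun gT -> gT}).
Hypothesis FAf : F A f.

Definition fmorphism : {morphism A >-> gT} := Morphism (fmorM FAf).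

Lemma injm_fmorphism : 'injm fmorphism.
Proof. by apply/injmP; apply: fmor_inj FAf. Qed.

Lemma fmorphimE B : B \subset A -> fmorphism @* B = f @: B.
Proof. exact: morphimEsub. Qed.

Lemma fmor_imset_group_set B : group_set B -> B \subset A -> group_set (f @: B).
Proof.
by move=> gB sBA; rewrite -(fmorphimE sBA) -[B]/(Group gB : {set gT}) groupP.
Qed.

End Morphism.

Lemma centric_sub A : centric S F A -> A \subset S.
Proof. by case. Qed.

Lemma centric_fmor_imset A B f :
  F A f -> group_set B -> B \subset A -> centric S F B -> centric S F (f @: B).
Proof.
move=> FAf gB sBA [sBS cenB]; have FBf := fmor_restr FAf gB sBA.
split; first by rewrite -imset_restrm (fmor_imS FBf).
move=> g FfBg; rewrite -imset_restrm in FfBg.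
have := cenB _ (fs_comp fsF FBf FfBg (subxx _)).
by rewrite imset_restrm_comp !imset_restrm.
Qed.

Lemma centric_centS (A : {group gT}) : centric S F A -> 'C_S(A) \subset A.
Proof.
by case=> sAS cenA; have := cenA _ (fmor_id sAS); rewrite imset_restrm imset_id.
Qed.

Lemma centricS (A B : {group gT}) :
  A \subset B -> B \subset S -> centric S F A -> centric S F B.
Proof.
move=> sAB sBS [_ cenA]; split=> // g FBg.
have := cenA _ (fmor_restr FBg (groupP A) sAB); rewrite imset_restrm => sCA.
apply: subset_trans (imsetS g sAB).
by apply: subset_trans sCA; rewrite setIS // centS // imsetS.
Qed.

Lemma group_set_AutF (Q : {group gT}) : Q \subset S -> group_set (AutF F Q).
Proof.
move=> sQS; apply/group_setP; split.
  rewrite inE group1; have := fmor_id sQS; congr (F _ _).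
  by apply/ffunP=> x; rewrite !ffunE perm1.
move=> a b /setIdP[AutQa Fa] /setIdP[AutQb Fb]; rewrite inE groupM //=.
have saQ : restrm Q a @: Q \subset Q.
  by rewrite imset_restrm; apply/subsetP=> _ /imsetP[x Qx ->]; rewrite Aut_closed.
have := fs_comp fsF Fa Fb saQ; congr (F _ _); apply/ffunP=> x.
by rewrite !ffunE; case: ifP => //= Qx; rewrite permM !restrm_in ?Aut_closed.
Qed.

Lemma AutS_conj (Q : {set gT}) a s x :
  restrm Q a = conjmor Q s -> x \in Q -> a x = x ^ s.
Proof. by move=> /ffunP/(_ x) + Qx; rewrite !restrm_in. Qed.

Lemma group_set_AutS (Q : {group gT}) : group_set (AutS S Q).
Proof.
apply/group_setP; split.
  rewrite inE group1; apply/existsP; exists 1; rewrite group1 /=.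
  by apply/eqP/ffunP=> x; rewrite !ffunE perm1 conjg1.
move=> a b /setIdP[AutQa /exists_inP[s NQs /eqP as_]].
case/setIdP=> AutQb /exists_inP[t NQt /eqP bt]; rewrite inE groupM //=.
apply/exists_inP; exists (s * t); rewrite ?groupM //.
apply/eqP/ffunP=> x; rewrite !ffunE; case: ifP => //= Qx.
have nQs : s \in 'N(Q) by case/setIP: NQs.
by rewrite permM (AutS_conj as_ Qx) (AutS_conj bt) ?conjgM ?memJ_norm.
Qed.

Lemma fmor_AutF (Q : {group gT}) f :
  F Q f -> f @: Q \subset Q -> exists2 a, a \in AutF F Q & {in Q, a =1 f}.
Proof.
move=> FQf sfQ; have injf := injm_fmorphism FQf.
have imQ : fmorphism FQf @* Q = Q by apply/(morphim_fixP injf); rewrite ?fmorphimE.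
exists (aut injf imQ); last exact: autE.
rewrite inE Aut_aut /=; suff -> : restrm Q (aut injf imQ) = f by [].
apply/ffunP=> x.
case: (boolP (x \in Q)) => Qx; first by rewrite restrm_in ?autE.
by rewrite restrm_out ?(fmor_out FQf).
Qed.

Lemma AutF_transport (Q : {group gT}) psi al :
  F Q psi -> F Q al -> al @: Q \subset Q ->
  exists2 b, b \in AutF F (psi @: Q) & {in Q, forall x, b (psi x) = psi (al x)}.
Proof.
move=> Fpsi Fal salQ; have [psi' [Fpsi' psi'K]] := fs_inv fsF Fpsi.
have spsi'Q : psi' @: (psi @: Q) \subset Q.
  by apply/subsetP=> _ /imsetP[_ /imsetP[x Qx ->] ->]; rewrite psi'K.
have Fal' := fs_comp fsF Fpsi' Fal spsi'Q.
have sal'Q : restrm (psi @: Q) (al \o psi') @: (psi @: Q) \subset Q.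
  by rewrite imset_restrm_comp (subset_trans (imsetS _ spsi'Q)).
have Fb := fs_comp fsF Fal' Fpsi sal'Q.
have bE x : x \in Q -> restrm (psi @: Q) (psi \o restrm (psi @: Q) (al \o psi'))
  (psi x) = psi (al x).
  by move=> Qx; rewrite restrm_in ?imset_f //= restrm_in ?imset_f //= psi'K.
have gQ := fmor_imset_group_set Fpsi (groupP Q) (subxx _).
have [|b AutFb bE'] := fmor_AutF (Q := Group gQ) Fb.
  apply/subsetP=> /= _ /imsetP[_ /imsetP[x Qx ->] ->].
  by rewrite bE // imset_f // (subsetP salQ) ?imset_f.
by exists b => // x Qx; rewrite bE' ?imset_f ?bE.
Qed.

Lemma fully_normalized_conjugate (Q : {group gT}) :
  Q \subset S -> exists2 psi, F Q psi & fully_normalized S F (psi @: Q).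
Proof.
move=> sQS; have [psi Fpsi maxpsi] :=
  arg_maxnP (fun f => #|'N_S(f @: Q)|) (fmor_id sQS : F Q (restrm Q id)).
exists psi => //; split=> [|chi Fchi]; first exact: fmor_imS Fpsi.
by have := maxpsi _ (fs_comp fsF Fpsi Fchi (subxx _)); rewrite imset_restrm_comp.
Qed.

Section FixCentric.

Variables (Q Y : {group gT}) (al : {ffun gT -> gT}).
Hypotheses (Fal : F Q al) (sYQ : Y \subset Q) (nYQ : Q \subset 'N(Y)).
Hypotheses (cenY : centric S F Y) (alY : {in Y, forall y, al y = y}).

Lemma fix_centric_mulV u : u \in Q -> u^-1 * al u \in Y.
Proof.
move=> Qu; apply: (subsetP (centric_centS cenY)).
have alu_S : al u \in S by rewrite (subsetP (fmor_imS Fal)) ?imset_f.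
rewrite inE groupM ?groupV ?alu_S ?(subsetP (fmor_sub Fal)) //=.
apply/centP=> y Yy; set y1 := y ^ u^-1.
have Yy1 : y1 \in Y by rewrite memJ_norm // groupV (subsetP nYQ).
have y1al : y1 ^ al u = y.
  have := morphJ (fmorphism Fal) (subsetP sYQ _ Yy1) Qu; rewrite /= => alJ.
  by rewrite -(alY Yy1) -alJ /y1 conjgKV alY.
by apply/commute_sym/commgP/conjg_fixP; rewrite conjgM -/y1 y1al.
Qed.

Lemma fix_centric_stable : al @: Q \subset Q.
Proof.
apply/subsetP=> _ /imsetP[u Qu ->].
by rewrite -(mulKVg u (al u)) groupM // (subsetP sYQ) // fix_centric_mulV.
Qed.

End FixCentric.

Lemma centric_fully_centralized (H : fsys gT) (A : {group gT}) :
  (forall B f, H B f -> F B f) -> centric S F A -> fully_centralized S H A.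
Proof.
move=> HF [sAS cenA]; split=> // f /HF FAf.
have sCZ : 'C_S(f @: A) \subset 'Z(f @: A) by rewrite subsetI cenA // subsetIr.
apply: leq_trans (subset_leq_card sCZ) _.
have injf := injm_fmorphism FAf.
rewrite -(fmorphimE FAf) // -injm_center // card_injm ?subsetIl //.
by rewrite subset_leq_card // subsetI subsetIr (subset_trans (subsetIl _ _)).
Qed.

Lemma fmor_norms (X A : {group gT}) f :
  F X f -> A \subset X -> X \subset 'N(A) -> f @: X \subset 'N(f @: A).
Proof. by move=> FXf sAX nAX; rewrite -!(fmorphimE FXf) ?morphim_norms. Qed.

Lemma sub_Nphi (X A : {group gT}) psi :
  F X psi -> A \subset X -> X \subset 'N(A) -> X \subset Nphi S A (restrm A psi).
Proof.
move=> FXpsi sAX nAX; apply/subsetP=> x Xx; rewrite inE.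
have [Sx NAx] := (subsetP (fmor_sub FXpsi) x Xx, subsetP nAX x Xx).
rewrite inE Sx NAx /=; apply/exists_inP; exists (psi x).
  rewrite inE (subsetP (fmor_imS FXpsi)) ?imset_f //= imset_restrm.
  by rewrite (subsetP (fmor_norms FXpsi sAX nAX)) ?imset_f.
apply/forall_inP=> y Ay; have Xy := subsetP sAX y Ay.
by rewrite !restrm_in ?memJ_norm //; have /= -> := morphJ (fmorphism FXpsi) Xy Xx.
Qed.

End FusionSystem.

Section Saturation.

Variables (gT : finGroupType) (p : nat) (S : {group gT}) (F : fsys gT).
Hypotheses (fsF : fusion_system S F) (pS : p.-group S) (satF : saturated p S F).

Lemma AutF_p_elt_Sylow_conj (Q : {group gT}) a :
  fully_normalized S F Q -> a \in AutF F Q -> p.-elt a ->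
  exists2 c, c \in AutF F Q & a ^ c \in AutS S Q.
Proof.
move=> fnQ AutFa pa; have [_ sylQ] := satF.1 Q fnQ.
pose AF := Group (group_set_AutF fsF fnQ.1); pose AS := Group (group_set_AutS S Q).
have sAF : <[a]> \subset AF by rewrite cycle_subG.
have [c AFc] := Sylow_subJ (sylQ : p.-Sylow(AF) AS) sAF pa.
by rewrite cycle_subG => aASc; exists c^-1; [exact: groupVr AFc | rewrite -mem_conjg].
Qed.

Lemma AutF_fix_centric_conj (Q Y : {group gT}) a :
  fully_normalized S F Q -> a \in AutF F Q ->
  Y \subset Q -> Q \subset 'N(Y) -> centric S F Y -> {in Y, forall y, a y = y} ->
  exists2 z, z \in Y & {in Q, forall x, a x = x ^ z}.
Proof.
move=> fnQ AutFa sYQ nYQ cenY aY; have /setIdP[AutQa FQa] := AutFa.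
have raY : {in Y, forall y, restrm Q a y = y}.
  by move=> y Yy; rewrite restrm_in ?aY ?(subsetP sYQ).
have aQ x : x \in Q -> x^-1 * a x \in Y.
  by move=> Qx; have := fix_centric_mulV fsF FQa sYQ nYQ cenY raY Qx; rewrite restrm_in.
have pY : p.-group Y := pgroupS (centric_sub cenY) pS.
have pa := Aut_fix_coset_p_elt pY sYQ AutQa aY aQ.
(* By Sylow, [a] is conjugate in [Aut_F(Q)] to a conjugation [c_s], and [s]
   centralizes the centric subgroup [c(Y)], hence lies in it. *)
have [c AutFc] := AutF_p_elt_Sylow_conj fnQ AutFa pa.
case/setIdP=> _ /exists_inP[s NQs /eqP acs]; have /setIdP[AutQc FQc] := AutFc.
have acE x : x \in Q -> c (a (c^-1 x)) = x ^ s.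
  by move=> Qx; rewrite -(AutS_conj acs Qx) !permM.
pose cY := Group (fmor_imset_group_set fsF FQc (groupP Y) sYQ).
have cen_cY : centric S F cY := centric_fmor_imset fsF FQc (groupP Y) sYQ cenY.
have /imsetP[y0 Yy0 sE] : s \in restrm Q c @: Y.
  apply: (subsetP (centric_centS fsF cen_cY)).
  rewrite inE (setIP NQs).1; apply/centP=> _ /imsetP[y Yy ->].
  apply/commute_sym/commgP/conjg_fixP.
  by rewrite restrm_in ?(subsetP sYQ) // -acE ?Aut_closed ?(subsetP sYQ) // permK aY.
rewrite {}sE in acE; exists y0 => // x Qx; apply: (@perm_inj _ c).
have /= cJ := morphJ (autm AutQc) Qx (subsetP sYQ y0 Yy0); rewrite !autmE in cJ.
by rewrite cJ -(restrm_in c (subsetP sYQ y0 Yy0)) -acE ?Aut_closed // permK.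
Qed.

Lemma fix_centric_conj (Q Y : {group gT}) al :
  F Q al -> Y \subset Q -> Q \subset 'N(Y) -> centric S F Y ->
  {in Y, forall y, al y = y} -> exists2 z, z \in Y & al = conjmor Q z.
Proof.
move=> FQal sYQ nYQ cenY alY.
have salQ := fix_centric_stable fsF FQal sYQ nYQ cenY alY.
have [psi FQpsi fnQ'] := fully_normalized_conjugate fsF (fmor_sub fsF FQal).
have [b AutFb bE] := AutF_transport fsF FQpsi FQal salQ.
pose Q' := Group (fmor_imset_group_set fsF FQpsi (groupP Q) (subxx _)).
pose Y' := Group (fmor_imset_group_set fsF FQpsi (groupP Y) sYQ).
have bY' : {in Y', forall y, b y = y}.
  by move=> _ /imsetP[y Yy ->]; rewrite bE ?alY ?(subsetP sYQ).
have [_ /imsetP[y0 Yy0 ->] bJ] :=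
  AutF_fix_centric_conj (Q := Q') (Y := Y') fnQ' AutFb (imsetS _ sYQ)
    (fmor_norms fsF FQpsi sYQ nYQ)
    (centric_fmor_imset fsF FQpsi (groupP Y) sYQ cenY) bY'.
exists y0 => //; apply/ffunP=> x; case: (boolP (x \in Q)) => Qx; last first.
  by rewrite restrm_out ?(fmor_out fsF FQal).
have Qy0 := subsetP sYQ y0 Yy0.
have Qalx : al x \in Q := subsetP salQ _ (imset_f _ Qx).
rewrite restrm_in //; apply: (fmor_inj fsF FQpsi Qalx (groupJ Qx Qy0)).
by have /= -> := morphJ (fmorphism fsF FQpsi) Qx Qy0; rewrite -bE ?bJ ?imset_f.
Qed.

Lemma fmor_agree_centric_conj (X A : {group gT}) psi k :
  F X psi -> F X k -> A \subset X -> X \subset 'N(A) -> centric S F A ->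
  {in A, forall a, psi a = k a} ->
  exists2 z, z \in k @: A & psi = restrm X (fun x => k x ^ z).
Proof.
move=> FXpsi FXk sAX nAX cenA psik.
have [k' [Fk' k'K]] := fs_inv fsF FXk.
have sk'X : k' @: (k @: X) \subset X.
  by apply/subsetP=> _ /imsetP[_ /imsetP[x Xx ->] ->]; rewrite k'K.
have Fal := fs_comp fsF Fk' FXpsi sk'X.
pose kX := Group (fmor_imset_group_set fsF FXk (groupP X) (subxx _)).
pose kA := Group (fmor_imset_group_set fsF FXk (groupP A) sAX).
have alkA : {in kA, forall y, restrm kX (psi \o k') y = y}.
  move=> _ /imsetP[a Aa ->]; have Xa := subsetP sAX a Aa.
  by rewrite restrm_in ?imset_f //= k'K ?psik.
have [z kAz alE] := fix_centric_conj (Q := kX) (Y := kA) Fal (imsetS _ sAX)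
    (fmor_norms fsF FXk sAX nAX) (centric_fmor_imset fsF FXk (groupP A) sAX cenA) alkA.
exists z => //; apply/ffunP=> x; case: (boolP (x \in X)) => Xx; last first.
  by rewrite restrm_out ?(fmor_out fsF FXpsi).
have /ffunP/(_ (k x)) := alE; rewrite !restrm_in ?imset_f //= k'K //.
Qed.

End Saturation.

Lemma normalizer_fsysS (gT : finGroupType) (S : {group gT}) (E1 E2 : fsys gT)
    (P A : {set gT}) f :
  (forall B g, E1 B g -> E2 B g) ->
  normalizer_fsys S E1 P A f -> normalizer_fsys S E2 P A f.
Proof.
move=> E12; rewrite /normalizer_fsys.
case/and4P=> -> -> /E12 -> /existsP[g /and4P[/E12 E2g gAP gP gA]].
by apply/existsP; exists g; rewrite E2g gAP gP gA.
Qed.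

Lemma eq_orbit_hom (gT : finGroupType) (E1 E2 : fsys gT) (R Q : {set gT}) :
  (forall f : {ffun gT -> gT}, f @: R \subset Q -> E1 R f = E2 R f) ->
  orbit_hom E1 R Q = orbit_hom E2 R Q.
Proof.
move=> eqE; rewrite /orbit_hom; suff -> : homset E1 R Q = homset E2 R Q by [].
by apply/setP=> f; rewrite !inE; case: (boolP (f @: R \subset Q)) => [/eqE->|];
  rewrite ?andbF ?andbT.
Qed.

Section Subsystem.

Variables (gT : finGroupType) (p : nat) (S : {group gT}) (F H : fsys gT).
Hypotheses (fsF : fusion_system S F) (pS : p.-group S) (satF : saturated p S F).
Hypotheses (fsH : fusion_system S H) (satH : saturated p S H).
Hypothesis HF : forall A f, H A f -> F A f.

Lemma subsys_fmor_normal_centric (X A : {group gT}) psi :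
  F X psi -> A \subset X -> X \subset 'N(A) -> centric S F A ->
  H A (restrm A psi) -> H X psi.
Proof.
move=> FXpsi sAX nAX cenA HApsi; have FApsi := HF HApsi.
pose phiA := Group (fmor_imset_group_set fsF FApsi (groupP A) (subxx _)).
have fcA : fully_centralized S H phiA.
  apply: (centric_fully_centralized fsF HF).
  exact: (centric_fmor_imset fsF FApsi (groupP A) (subxx _) cenA : centric S F phiA).
have [g [HNg gA]] := satH.2 A _ HApsi fcA.
have HXk := fmor_restr fsH HNg (groupP X) (sub_Nphi fsF FXpsi sAX nAX).
have psik : {in A, forall a, psi a = restrm X g a}.
  move=> a Aa; rewrite restrm_in ?(subsetP sAX) //.
  by have /ffunP/(_ a) := gA; rewrite !restrm_in.
have [z kAz psiE] :=
  fmor_agree_centric_conj fsF pS satF FXpsi (HF HXk) sAX nAX cenA psik.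
pose kX := Group (fmor_imset_group_set fsH HXk (groupP X) (subxx _)).
have Sz : z \in S by rewrite (subsetP (fmor_imS fsH HXk)) ?(subsetP (imsetS _ sAX)).
have := fs_comp fsH HXk (fs_conj fsH (fmor_imS fsH HXk : kX \subset S) Sz) (subxx _).
rewrite psiE; congr (H _ _); apply/ffunP=> x; rewrite !ffunE.
by case: ifP => //= Xx; rewrite /conjmor restrm_in ?imset_f ?restrm_in.
Qed.

Lemma subsys_fmor_centric (X A : {group gT}) psi :
  F X psi -> A \subset X -> centric S F A -> H A (restrm A psi) -> H X psi.
Proof.
(* In the p-group X, A < N_X(A): either A is normal in X, or N_X(A) splits
   the gap |X| - |A| into two smaller ones. *)
have [n] := ubnP (#|X| - #|A|); elim: n X A psi => // n IHn X A psi /ltnSE leXA.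
move=> FXpsi sAX cenA HApsi; have sXS := fmor_sub fsF FXpsi.
have [eAX | ltAX] := eqVproper sAX.
  by rewrite eAX (restrm_fmor fsF FXpsi) in HApsi.
have [eNX | ltNX] := eqVproper (subsetIl X 'N(A)).
  by apply: subsys_fmor_normal_centric FXpsi sAX _ cenA HApsi; rewrite -eNX subsetIr.
pose N := 'N_X(A)%G; have sNX : N \subset X := subsetIl X 'N(A).
have ltANA : A \proper N := nilpotent_proper_norm (pgroup_nil (pgroupS sXS pS)) ltAX.
have ltA : #|A| < #|N| := proper_card ltANA.
have ltN : #|N| < #|X| := proper_card ltNX.
have FNpsi := fmor_restr fsF FXpsi (groupP N) sNX.
apply: (IHn _ N) => //; first lia.
  exact: (centricS fsF (proper_sub ltANA) (subset_trans sNX sXS) cenA).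
apply: (IHn N A) => //; first lia; first exact: proper_sub ltANA.
by rewrite restrm_restrm ?proper_sub.
Qed.

Lemma normalizer_cap_centric (P A : {group gT}) f :
  centric S F A -> fsys_cap (normalizer_fsys S F P) H A f -> normalizer_fsys S H P A f.
Proof.
move=> cenA; rewrite /fsys_cap /normalizer_fsys.
case/andP=> /and4P[-> -> _ /existsP[g /and4P[Fg gAP gP gA]]] HAf.
rewrite HAf; apply/existsP; exists g; rewrite gAP gP gA !andbT /=.
pose AP := Group (fmor_group_set fsF Fg).
apply: (subsys_fmor_centric (X := AP) Fg _ cenA); first by rewrite mulg_subl.
by rewrite (eqP gA).
Qed.

End Subsystem.

Theorem lemma4p2 (gT : finGroupType) (p : nat) (S : {group gT})
    (F H : fsys gT) (P : {group gT}) :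
  prime p -> (p.-group S)%g ->
  fusion_system S F -> saturated p S F ->
  fusion_system S H -> saturated p S H ->
  (forall A f, H A f -> F A f) ->
  fully_normalized S F P ->
  (forall A f, normalizer_fsys S H P A f ->
     fsys_cap (normalizer_fsys S F P) H A f) /\
  (forall (A B : {group gT}) (f : {ffun gT -> gT}),
     A \subset ('N_S(P))%g -> B \subset ('N_S(P))%g ->
     centric S F A -> centric S F B -> [set f x | x in A] \subset B ->
     fsys_cap (normalizer_fsys S F P) H A f = normalizer_fsys S H P A f) /\
  (forall C : {set {group gT}},
     (forall Q : {group gT}, Q \in C -> centric S F Q) ->
     forall R Q : {group gT}, R \in C -> Q \in C ->
       R \subset ('N_S(P))%g -> Q \subset ('N_S(P))%g ->
       orbit_hom (fsys_cap (normalizer_fsys S F P) H) R Q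
       = orbit_hom (normalizer_fsys S H P) R Q).
Proof.
move=> _ pS fsF satF fsH satH HF _.
have capN A f : normalizer_fsys S H P A f -> fsys_cap (normalizer_fsys S F P) H A f.
  by move=> NHf; rewrite /fsys_cap (normalizer_fsysS HF NHf); case/and4P: NHf.
have eqN (A : {group gT}) f :
    centric S F A -> fsys_cap (normalizer_fsys S F P) H A f = normalizer_fsys S H P A f.
  move=> cenA; apply/idP/idP => [|/capN //].
  exact: (normalizer_cap_centric fsF pS satF fsH satH HF cenA).
split=> //; split=> [A B f _ _ cenA _ _|C cenC R Q CR _ _ _]; first exact: eqN.
by apply: eq_orbit_hom => f _; apply: eqN; apply: cenC.
Qed.
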